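(* If $u,v:\mathbb{C}\to\mathbb{R}$ are harmonic and $f=u+iv$ is nonconstant, then $\mathcal{D}(f(\mathbb{C}))$ is a nonempty closed subset of $\partial\mathbb{D}$.
   Context: $\partial\mathbb{D}$ is the unit circle. For a set $\mathcal{R}\subset\mathbb{C}$, a point $e^{i\theta}\in\partial\mathbb{D}$ is an asymptotic direction of $\mathcal{R}$ if there exist points $w_n\in\mathcal{R}$ and positive numbers $\varepsilon_n\to 0$ with $\varepsilon_n w_n\to e^{i\theta}$; $\mathcal{D}(\mathcal{R})$ denotes the set of asymptotic directions of $\mathcal{R}$. *)

From Stdlib Require Import Reals.
From Coquelicot Require Import Coquelicot.
Open Scope R_scope.

Definition dx (u : C -> R) : C -> R :=
  fun z => Derive (fun t => u (t, snd z)) (fst z).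
Definition dy (u : C -> R) : C -> R :=
  fun z => Derive (fun t => u (fst z, t)) (snd z).

Definition has_partials (u : C -> R) : Prop :=
  forall z : C, ex_derive (fun t => u (t, snd z)) (fst z) /\
                ex_derive (fun t => u (fst z, t)) (snd z).

Definition C2_fun (u : C -> R) : Prop :=
  has_partials u /\ has_partials (dx u) /\ has_partials (dy u) /\
  forall z : C,
    continuous u z /\ continuous (dx u) z /\ continuous (dy u) z /\
    continuous (dx (dx u)) z /\ continuous (dx (dy u)) z /\
    continuous (dy (dx u)) z /\ continuous (dy (dy u)) z.

Definition harmonic (u : C -> R) : Prop :=
  C2_fun u /\ forall z : C, dx (dx u) z + dy (dy u) z = 0.

Definition asymptotic_direction (S : C -> Prop) (z : C) : Prop :=
  Cmod z = 1 /\
  exists (w : nat -> C) (eps : nat -> R),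
    (forall n, S (w n)) /\ (forall n, 0 < eps n) /\
    is_lim_seq eps 0 /\
    filterlim (fun n => Cmult (RtoC (eps n)) (w n)) eventually (locally z).

Definition image (f : C -> C) : C -> Prop := fun w => exists z, w = f z.

From Stdlib Require Import Reals Lra Lia Classical ClassicalEpsilon.
From Coquelicot Require Import Coquelicot.
Open Scope R_scope.

(* If f = (u, v) is unbounded, pick w_n in f(C) with |w_n| > n: by Bolzano-Weierstrass
   the unit vectors w_n / |w_n| have a cluster point, which is an asymptotic direction.
   The asymptotic directions form the intersection of the unit circle with the set of
   points approximated by eps w (w in f(C), eps arbitrarily small), a closed set.

   If f were bounded, u and v would be bounded harmonic functions, hence constant.
   This Liouville theorem is proved by reflection: for bounded harmonic u, the function
   W(x,y) = u(x,y) - u(2c-x,y) is harmonic, bounded by B and vanishes on x = c.  On the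
   rectangle [c, c+r] x [-r, r] the maximum principle bounds W by the harmonic barrier
   (|B|/r^2) (2r(x-c) - (x-c)^2 + y^2), which tends to 0 as r grows; so W <= 0 on x >= c,
   and likewise -W <= 0.  Hence u is symmetric about every vertical line, i.e. does not
   depend on x, and by symmetry not on y either. *)

(** * Cluster points *)

Lemma RinvN_lt (e : R) : 0 < e -> exists N : nat, forall n, (N <= n)%nat -> / (INR n + 1) < e.
Proof.
  intros He. destruct (archimed_cor1 e He) as [N [HN HN0]].
  exists N. intros n Hn.
  apply le_INR in Hn. apply lt_0_INR in HN0.
  apply Rlt_trans with (/ INR N); [apply Rinv_lt_contravar|]; nra.
Qed.

Definition in_rect (a b a' b' : R) (z : C) : Prop :=
  a <= fst z <= b /\ a' <= snd z <= b'.

Definition cluster_point {T : UniformSpace} (z : nat -> T) (c : T) : Prop :=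
  forall (r : posreal) (N : nat), exists n, (N <= n)%nat /\ ball c r (z n).

Lemma closed_cluster_point {T : UniformSpace} (D : T -> Prop) (z : nat -> T) (c : T) :
  closed D -> (forall n, D (z n)) -> cluster_point z c -> D c.
Proof.
  intros HD Hz Hc. apply HD. intros [r Hr].
  destruct (Hc r O) as [n [_ Hn]]. exact (Hr _ Hn (Hz n)).
Qed.

Lemma bounded_seq_cluster_point (x : nat -> R) (a b : R) :
  (forall n, a <= x n <= b) -> exists l, cluster_point x l.
Proof.
  intros Hx. destruct (Bolzano_Weierstrass x _ (compact_P3 a b) Hx) as [l Hl].
  exists l. intros r N. apply (Hl (disc l r) N). exists r. now intros y.
Qed.

Lemma bounded_seq_cluster_point_2d (z : nat -> C) (a b a' b' : R) :
  (forall n, in_rect a b a' b' (z n)) -> exists c, cluster_point z c.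
Proof.
  intros Hz.
  (* Pass to a subsequence whose first coordinates converge, then cluster its second ones. *)
  destruct (bounded_seq_cluster_point (fun n => fst (z n)) a b) as [l1 Hl1].
  { intro n. apply Hz. }
  assert (Hsub : forall k : nat, exists n, (k <= n)%nat /\ ball l1 (RinvN k) (fst (z n)))
    by (intro k; apply Hl1).
  destruct (choice _ Hsub) as [phi Hphi].
  destruct (bounded_seq_cluster_point (fun k => snd (z (phi k))) a' b') as [l2 Hl2].
  { intro k. apply Hz. }
  exists (l1, l2). intros r N.
  destruct (RinvN_lt r (cond_pos r)) as [K HK].
  destruct (Hl2 r (max N K)) as [k [Hk Hball]].
  destruct (Hphi k) as [Hk' Hball'].
  exists (phi k). split; [lia|]. split; [|exact Hball].
  apply ball_le with (RinvN k); [|exact Hball'].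
  left. apply HK. lia.
Qed.

Lemma Rabs_fst_snd_le_Cmod (z : C) : Rabs (fst z) <= Cmod z /\ Rabs (snd z) <= Cmod z.
Proof.
  pose proof (Rmax_Cmod z). pose proof (Rmax_l (Rabs (fst z)) (Rabs (snd z))).
  pose proof (Rmax_r (Rabs (fst z)) (Rabs (snd z))). lra.
Qed.

(** * Asymptotic directions *)

Definition asymptotic_cluster (S : C -> Prop) (d : C) : Prop :=
  forall r e : posreal, exists w eps,
    S w /\ 0 < eps < e /\ ball d r (Cmult (RtoC eps) w).

Lemma asymptotic_directionE (S : C -> Prop) (d : C) :
  asymptotic_direction S d <-> Cmod d = 1 /\ asymptotic_cluster S d.
Proof.
  split.
  - intros [Hd [w [eps [HS [Hpos [Hlim Hconv]]]]]]. split; [exact Hd|]. intros r e.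
    apply is_lim_seq_spec in Hlim. destruct (Hlim e) as [N1 H1].
    destruct (proj1 (filterlim_locally _ _) Hconv r) as [N2 H2].
    exists (w (max N1 N2)), (eps (max N1 N2)).
    specialize (H1 (max N1 N2) ltac:(lia)). specialize (Hpos (max N1 N2)).
    rewrite Rminus_0_r, Rabs_pos_eq in H1 by lra.
    split; [apply HS|]. split; [lra|]. apply H2. lia.
  - intros [Hd Hcl]. split; [exact Hd|].
    assert (Hseq : forall n : nat, exists p : C * R,
      S (fst p) /\ 0 < snd p < RinvN n /\ ball d (RinvN n) (Cmult (RtoC (snd p)) (fst p)))
      by (intro n; destruct (Hcl (RinvN n) (RinvN n)) as (w & eps & H); now exists (w, eps)).
    destruct (choice _ Hseq) as [p Hp].
    exists (fun n => fst (p n)), (fun n => snd (p n)).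
    split; [apply Hp|]. split; [apply Hp|]. split.
    + apply is_lim_seq_spec. intro e. destruct (RinvN_lt e (cond_pos e)) as [N HN].
      exists N. intros n Hn. specialize (HN n Hn). destruct (Hp n) as [_ [Hpn _]].
      simpl in Hpn. rewrite Rminus_0_r, Rabs_pos_eq; lra.
    + apply filterlim_locally. intro r. destruct (RinvN_lt r (cond_pos r)) as [N HN].
      exists N. intros n Hn. apply ball_le with (RinvN n); [left; now apply HN | apply Hp].
Qed.

Lemma closed_unit_circle : closed (fun z : C => Cmod z = 1).
Proof.
  apply (closed_comp Cmod (fun t => t = 1)); [|apply closed_eq].
  exact (filterlim_norm (V := C_NormedModule)).
Qed.

Lemma closed_asymptotic_cluster (S : C -> Prop) : closed (asymptotic_cluster S).
Proof.
  intros d Hd r e.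
  destruct (classic (exists d', ball d (r / 2) d' /\ asymptotic_cluster S d'))
    as [[d' [Hdd' Hd']] | Hno].
  - destruct (Hd' (pos_div_2 r) e) as (w & eps & Hw & Heps & Hball).
    exists w, eps. split; [exact Hw|]. split; [exact Heps|].
    replace (pos r) with (r / 2 + r / 2) by field.
    exact (ball_triangle _ _ _ _ _ Hdd' Hball).
  - exfalso. apply Hd. exists (pos_div_2 r). intros d' Hb Hcl. apply Hno. now exists d'.
Qed.

Lemma closed_asymptotic_direction (S : C -> Prop) : closed (asymptotic_direction S).
Proof.
  apply (closed_ext (fun d => Cmod d = 1 /\ asymptotic_cluster S d)).
  - intro d. symmetry. apply asymptotic_directionE.
  - apply closed_and; [apply closed_unit_circle | apply closed_asymptotic_cluster].
Qed.

Lemma unbounded_asymptotic_direction (S : C -> Prop) :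
  (forall K, exists w, S w /\ K < Cmod w) -> exists d, asymptotic_direction S d.
Proof.
  intros Hub.
  destruct (choice _ (fun n : nat => Hub (INR n + 1))) as [w Hw].
  assert (Hw0 : forall n, 0 < Cmod (w n))
    by (intro n; pose proof (pos_INR n); pose proof (proj2 (Hw n)); lra).
  set (unit_w n := Cmult (RtoC (/ Cmod (w n))) (w n)).
  assert (Hmod : forall n, Cmod (unit_w n) = 1).
  { intro n. unfold unit_w. rewrite Cmod_mult, Cmod_R, Rabs_pos_eq.
    - field. apply Rgt_not_eq, Hw0.
    - left. apply Rinv_0_lt_compat, Hw0. }
  destruct (bounded_seq_cluster_point_2d unit_w (-1) 1 (-1) 1) as [c Hc].
  { intro n. pose proof (Rabs_fst_snd_le_Cmod (unit_w n)) as Hle. rewrite Hmod in Hle.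
    split; apply Rabs_le_between; apply Hle. }
  exists c. apply asymptotic_directionE. split.
  - exact (closed_cluster_point _ unit_w c closed_unit_circle Hmod Hc).
  - intros r e. destruct (RinvN_lt e (cond_pos e)) as [N HN].
    destruct (Hc r N) as [n [Hn Hball]].
    exists (w n), (/ Cmod (w n)). split; [apply Hw|]. split; [|exact Hball].
    split; [apply Rinv_0_lt_compat, Hw0|].
    apply Rlt_trans with (/ (INR n + 1)); [|now apply HN].
    apply Rinv_lt_contravar; [|apply Hw].
    apply Rmult_lt_0_compat; [pose proof (pos_INR n); lra | apply Hw0].
Qed.

(** * Maximum principle on rectangles *)

Definition on_rect_boundary (a b a' b' : R) (z : C) : Prop :=
  in_rect a b a' b' z /\ (fst z = a \/ fst z = b \/ snd z = a' \/ snd z = b').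

Lemma in_rect_interior_or_boundary (a b a' b' : R) (z : C) :
  in_rect a b a' b' z ->
  (a < fst z < b /\ a' < snd z < b') \/ on_rect_boundary a b a' b' z.
Proof.
  intros Hz.
  destruct (Req_dec (fst z) a); [right; split; auto|].
  destruct (Req_dec (fst z) b); [right; split; auto|].
  destruct (Req_dec (snd z) a'); [right; split; auto|].
  destruct (Req_dec (snd z) b'); [right; split; auto|].
  left. destruct Hz. lra.
Qed.

Lemma continuous_section_x (u : C -> R) (x y : R) :
  continuous u (x, y) -> continuity_pt (fun t => u (t, y)) x.
Proof.
  intros Hu. apply continuity_pt_filterlim.
  apply (continuous_comp (fun t => (t, y)) u); [|exact Hu].
  intros P [r HP]. exists r. intros t Ht. apply HP. split; [exact Ht | apply ball_center].
Qed.

Lemma continuous_comp_nonexpansive (u : C -> R) (phi : C -> C) :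
  (forall z w r, ball z r w -> ball (phi z) r (phi w)) ->
  (forall z, continuous u z) -> forall z, continuous (fun w => u (phi w)) z.
Proof.
  intros Hphi Hu z. apply (continuous_comp phi u); [|apply Hu].
  intros P [r HP]. exists r. intros w Hw. apply HP, Hphi, Hw.
Qed.

Lemma continuous_uniform_rect (u : C -> R) (a b a' b' : R) :
  (forall z, continuous u z) -> forall e : posreal, exists d : posreal,
    forall z w, in_rect a b a' b' z -> ball z d w -> ball (u z) e (u w).
Proof.
  intros Hu e.
  assert (Hmod : forall p : C, exists d : posreal,
    forall w, ball p d w -> ball (u p) (pos_div_2 e) (u w))
    by (intro p; exact (proj1 (filterlim_locally _ _) (Hu p) (pos_div_2 e))).
  destruct (choice _ Hmod) as [delta Hdelta].
  destruct (compactness_value_2d a b a' b' (fun x y => pos_div_2 (delta (x, y)))) as [d Hd].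
  exists d. intros [x y] w [Hx Hy] Hw.
  apply NNPP. intro Hfar. apply (Hd x y Hx Hy). intros (p1 & p2 & _ & _ & H1 & H2 & Hle).
  apply Hfar. simpl in H1, H2, Hle.
  assert (Hp : ball (p1, p2) (delta (p1, p2) / 2) (x, y)).
  { split; assumption. }
  assert (Hpw : ball (p1, p2) (delta (p1, p2)) w).
  { apply ball_le with (delta (p1, p2) / 2 + d); [lra|].
    exact (ball_triangle _ _ _ _ _ Hp Hw). }
  replace (pos e) with (e / 2 + e / 2) by field.
  apply (ball_triangle _ (u (p1, p2))).
  - apply ball_sym, Hdelta, ball_le with (delta (p1, p2) / 2); [|exact Hp].
    pose proof (cond_pos (delta (p1, p2))). lra.
  - exact (Hdelta _ _ Hpw).
Qed.

Lemma continuous_rect_max (u : C -> R) (a b a' b' : R) :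
  a <= b -> a' <= b' -> (forall z, continuous u z) ->
  exists z, in_rect a b a' b' z /\ forall w, in_rect a b a' b' w -> u w <= u z.
Proof.
  intros Hab Hab' Hu.
  assert (Hrow : forall y, exists x, a <= x <= b /\ forall t, a <= t <= b -> u (t, y) <= u (x, y)).
  { intro y. destruct (continuity_ab_maj (fun t => u (t, y)) a b Hab) as [x [Hx1 Hx2]].
    - intros t _. apply continuous_section_x, Hu.
    - now exists x. }
  destruct (choice _ Hrow) as [xm Hxm].
  (* [y |-> max_t u (t, y) = u (xm y, y)] is continuous by uniform continuity of [u]. *)
  assert (Hg : forall y, a' <= y <= b' -> continuity_pt (fun y => u (xm y, y)) y).
  { intros y Hy. apply continuity_pt_filterlim, filterlim_locally. intro e.
    destruct (continuous_uniform_rect u a b a' b' Hu e) as [d Hd].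
    exists d. intros y' Hy'.
    (* [y'] comes typed as [R_UniformSpace]; retyping it keeps the atoms seen by [lra] equal. *)
    change R in y'.
    assert (Hyy' : forall x, ball ((x, y) : C) d (x, y'))
      by (intro x; split; [apply ball_center | exact Hy']).
    assert (B1 : Rabs (u (xm y', y') - u (xm y', y)) < e)
      by (apply (Hd (xm y', y)); [split; [apply Hxm | exact Hy] | apply Hyy']).
    assert (B2 : Rabs (u (xm y, y') - u (xm y, y)) < e)
      by (apply (Hd (xm y, y)); [split; [apply Hxm | exact Hy] | apply Hyy']).
    pose proof (proj2 (Hxm y') (xm y) (proj1 (Hxm y))).
    pose proof (proj2 (Hxm y) (xm y') (proj1 (Hxm y'))).
    change (Rabs (u (xm y', y') - u (xm y, y)) < e).
    apply Rabs_def2 in B1. apply Rabs_def2 in B2. apply Rabs_def1; lra. }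
  destruct (continuity_ab_maj (fun y => u (xm y, y)) a' b' Hab' Hg) as [ym [Hym Hymb]].
  exists (xm ym, ym). split; [split; [apply Hxm | exact Hymb]|].
  intros [x y] [Hx Hy].
  apply Rle_trans with (u (xm y, y)); [now apply Hxm | now apply Hym].
Qed.

Lemma Derive_local_max_eq_0 (g : R -> R) (x r : R) : 0 < r -> ex_derive g x ->
  (forall t, Rabs (t - x) < r -> g t <= g x) -> Derive g x = 0.
Proof.
  intros Hr [l Hl] Hmax. rewrite (is_derive_unique g x l Hl).
  pose (pr := exist _ l (proj1 (is_derive_Reals g x l) Hl) : derivable_pt g x).
  change (derive_pt g x pr = 0).
  apply (deriv_maximum g (x - r) (x + r) x pr); try lra.
  intros t H1 H2. apply Hmax, Rabs_def1; lra.
Qed.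

Lemma second_derivative_local_max_nonpos (g : R -> R) (x r D : R) : 0 < r ->
  (forall t, ex_derive g t) -> is_derive (Derive g) x D ->
  (forall t, Rabs (t - x) < r -> g t <= g x) -> D <= 0.
Proof.
  intros Hr Hg HD Hmax.
  pose proof (Derive_local_max_eq_0 g x r Hr (Hg x) Hmax) as Hcrit.
  (* If D > 0 then g' > 0 just right of x, so by the mean value theorem g increases there. *)
  apply Rnot_lt_le. intro HDpos.
  destruct (proj1 (is_derive_Reals _ _ _) HD (D / 2) ltac:(lra)) as [delta Hdelta].
  set (h := Rmin delta r / 2).
  assert (Hh : 0 < h < delta /\ h < r).
  { pose proof (cond_pos delta). pose proof (Rmin_l delta r). pose proof (Rmin_r delta r).
    assert (0 < Rmin delta r) by (apply Rmin_pos; lra). unfold h. lra. }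
  destruct (MVT_cor2 g (Derive g) x (x + h)) as [c [Hmvt Hc]]; [lra| |].
  { intros c _. apply is_derive_Reals, Derive_correct, Hg. }
  assert (Hslope : 0 < Derive g c).
  { specialize (Hdelta (c - x) ltac:(lra) ltac:(rewrite Rabs_pos_eq; lra)).
    replace (x + (c - x)) with c in Hdelta by ring.
    rewrite Hcrit, Rminus_0_r in Hdelta. apply Rabs_def2 in Hdelta.
    replace (Derive g c) with ((c - x) * (Derive g c / (c - x))) by (field; lra).
    apply Rmult_lt_0_compat; lra. }
  assert (g (x + h) <= g x) by (apply Hmax; rewrite Rabs_pos_eq; lra).
  assert (0 < Derive g c * (x + h - x)) by (apply Rmult_lt_0_compat; lra).
  lra.
Qed.

Definition pure_second_partials (u : C -> R) : Prop :=
  forall z : C,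
    ex_derive (fun t => u (t, snd z)) (fst z) /\
    ex_derive (fun t => dx u (t, snd z)) (fst z) /\
    ex_derive (fun t => u (fst z, t)) (snd z) /\
    ex_derive (fun t => dy u (fst z, t)) (snd z).

Definition laplacian (u : C -> R) (z : C) : R := dx (dx u) z + dy (dy u) z.

Lemma strictly_subharmonic_rect_max (u : C -> R) (a b a' b' m : R) :
  a <= b -> a' <= b' -> (forall z, continuous u z) -> pure_second_partials u ->
  (forall z, a < fst z < b -> a' < snd z < b' -> 0 < laplacian u z) ->
  (forall z, on_rect_boundary a b a' b' z -> u z <= m) ->
  forall z, in_rect a b a' b' z -> u z <= m.
Proof.
  intros Hab Hab' Hu Hpart Hlap Hbd z Hz.
  destruct (continuous_rect_max u a b a' b' Hab Hab' Hu) as [[x y] [Hxy Hmax]].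
  apply Rle_trans with (u (x, y)); [now apply Hmax|].
  destruct (in_rect_interior_or_boundary _ _ _ _ _ Hxy) as [[Hx Hy] | Hb]; [|now apply Hbd].
  exfalso. simpl in Hx, Hy.
  assert (Dxx : dx (dx u) (x, y) <= 0).
  { apply (second_derivative_local_max_nonpos (fun t => u (t, y)) x (Rmin (x - a) (b - x))).
    - apply Rmin_pos; lra.
    - intro t. apply (Hpart (t, y)).
    - apply Derive_correct, (Hpart (x, y)).
    - intros t Ht. apply Hmax. split; [|apply Hxy]. simpl. apply Rabs_def2 in Ht.
      pose proof (Rmin_l (x - a) (b - x)). pose proof (Rmin_r (x - a) (b - x)). lra. }
  assert (Dyy : dy (dy u) (x, y) <= 0).
  { apply (second_derivative_local_max_nonpos (fun t => u (x, t)) y (Rmin (y - a') (b' - y))).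
    - apply Rmin_pos; lra.
    - intro t. apply (Hpart (x, t)).
    - apply Derive_correct, (Hpart (x, y)).
    - intros t Ht. apply Hmax. split; [apply Hxy|]. simpl. apply Rabs_def2 in Ht.
      pose proof (Rmin_l (y - a') (b' - y)). pose proof (Rmin_r (y - a') (b' - y)). lra. }
  specialize (Hlap (x, y) Hx Hy). unfold laplacian in Hlap. lra.
Qed.

(** * The Laplace equation *)

(* Weaker than [harmonic] (no mixed partials, no continuity of second derivatives), so that
   stability under sums, reflections and the swap of coordinates is one-variable calculus. *)
Definition laplace_solution (u : C -> R) : Prop :=
  pure_second_partials u /\ (forall z, continuous u z) /\ forall z, laplacian u z = 0.

Lemma harmonic_laplace_solution (u : C -> R) : harmonic u -> laplace_solution u.
Proof.
  intros [[Hp [Hpx [Hpy Hc]]] Hlap]. split; [|split; [apply Hc | exact Hlap]].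
  intro z. split; [apply Hp|]. split; [apply Hpx|]. split; [apply Hp | apply Hpy].
Qed.

Section PartialsAlgebra.

Variables u v : C -> R.
Hypotheses (Hu : pure_second_partials u) (Hv : pure_second_partials v).

Lemma dx_plus (z : C) : dx (fun w => u w + v w) z = dx u z + dx v z.
Proof. apply Derive_plus; [apply Hu | apply Hv]. Qed.

Lemma dy_plus (z : C) : dy (fun w => u w + v w) z = dy u z + dy v z.
Proof. apply Derive_plus; [apply Hu | apply Hv]. Qed.

Lemma pure_second_partials_plus : pure_second_partials (fun w => u w + v w).
Proof.
  intro z. repeat split.
  - apply (ex_derive_plus (fun t => u (t, snd z))); [apply Hu | apply Hv].
  - apply (ex_derive_ext (fun t => dx u (t, snd z) + dx v (t, snd z))).
    + intro t. symmetry. apply dx_plus.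
    + apply (ex_derive_plus (fun t => dx u (t, snd z))); [apply Hu | apply Hv].
  - apply (ex_derive_plus (fun t => u (fst z, t))); [apply Hu | apply Hv].
  - apply (ex_derive_ext (fun t => dy u (fst z, t) + dy v (fst z, t))).
    + intro t. symmetry. apply dy_plus.
    + apply (ex_derive_plus (fun t => dy u (fst z, t))); [apply Hu | apply Hv].
Qed.

Lemma laplacian_plus (z : C) :
  laplacian (fun w => u w + v w) z = laplacian u z + laplacian v z.
Proof.
  unfold laplacian.
  replace (dx (dx u) z + dy (dy u) z + (dx (dx v) z + dy (dy v) z))
    with (dx (dx u) z + dx (dx v) z + (dy (dy u) z + dy (dy v) z)) by ring.
  f_equal.
  - unfold dx at 1.
    rewrite (Derive_ext _ (fun t => dx u (t, snd z) + dx v (t, snd z))) by (intro; apply dx_plus).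
    apply Derive_plus; [apply Hu | apply Hv].
  - unfold dy at 1.
    rewrite (Derive_ext _ (fun t => dy u (fst z, t) + dy v (fst z, t))) by (intro; apply dy_plus).
    apply Derive_plus; [apply Hu | apply Hv].
Qed.

End PartialsAlgebra.

Lemma dx_opp (u : C -> R) (z : C) : dx (fun w => - u w) z = - dx u z.
Proof. apply Derive_opp. Qed.

Lemma dy_opp (u : C -> R) (z : C) : dy (fun w => - u w) z = - dy u z.
Proof. apply Derive_opp. Qed.

Lemma pure_second_partials_opp (u : C -> R) :
  pure_second_partials u -> pure_second_partials (fun w => - u w).
Proof.
  intros Hu z. repeat split.
  - apply (ex_derive_opp (fun t => u (t, snd z))), Hu.
  - apply (ex_derive_ext (fun t => - dx u (t, snd z))); [intro t; symmetry; apply dx_opp|].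
    apply (ex_derive_opp (fun t => dx u (t, snd z))), Hu.
  - apply (ex_derive_opp (fun t => u (fst z, t))), Hu.
  - apply (ex_derive_ext (fun t => - dy u (fst z, t))); [intro t; symmetry; apply dy_opp|].
    apply (ex_derive_opp (fun t => dy u (fst z, t))), Hu.
Qed.

Lemma laplacian_opp (u : C -> R) (z : C) : laplacian (fun w => - u w) z = - laplacian u z.
Proof.
  unfold laplacian. rewrite Ropp_plus_distr. f_equal.
  - unfold dx at 1.
    rewrite (Derive_ext _ (fun t => - dx u (t, snd z))) by (intro; apply dx_opp).
    apply Derive_opp.
  - unfold dy at 1.
    rewrite (Derive_ext _ (fun t => - dy u (fst z, t))) by (intro; apply dy_opp).
    apply Derive_opp.
Qed.

Lemma Derive_reflect (f : R -> R) (c x : R) : ex_derive f (2 * c - x) ->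
  Derive (fun t => f (2 * c - t)) x = - Derive f (2 * c - x).
Proof.
  intros Hf. apply is_derive_unique.
  replace (- Derive f (2 * c - x)) with (scal (-1) (Derive f (2 * c - x)))
    by (unfold scal; simpl; unfold mult; simpl; ring).
  apply (is_derive_comp f (fun t => 2 * c - t)); [now apply Derive_correct|].
  auto_derive; auto.
Qed.

Lemma ex_derive_reflect (f : R -> R) (c x : R) : ex_derive f (2 * c - x) ->
  ex_derive (fun t => f (2 * c - t)) x.
Proof.
  intros Hf. apply (ex_derive_comp f (fun t => 2 * c - t)); [exact Hf|].
  auto_derive. exact I.
Qed.

Section Reflection.

Variables (u : C -> R) (c : R).
Hypothesis Hu : pure_second_partials u.

Lemma dx_reflect (z : C) :
  dx (fun w => u (2 * c - fst w, snd w)) z = - dx u (2 * c - fst z, snd z).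
Proof. apply (Derive_reflect (fun t => u (t, snd z))), (Hu (2 * c - fst z, snd z)). Qed.

Lemma pure_second_partials_reflect : pure_second_partials (fun w => u (2 * c - fst w, snd w)).
Proof.
  intro z. destruct (Hu (2 * c - fst z, snd z)) as (H1 & H2 & H3 & H4). repeat split.
  - exact (ex_derive_reflect (fun t => u (t, snd z)) c (fst z) H1).
  - apply (ex_derive_ext (fun t => - dx u (2 * c - t, snd z))).
    { intro t. symmetry. exact (dx_reflect (t, snd z)). }
    apply (ex_derive_opp (fun t => dx u (2 * c - t, snd z))).
    exact (ex_derive_reflect (fun t => dx u (t, snd z)) c (fst z) H2).
  - exact H3.
  - exact H4.
Qed.

Lemma laplacian_reflect (z : C) :
  laplacian (fun w => u (2 * c - fst w, snd w)) z = laplacian u (2 * c - fst z, snd z).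
Proof.
  unfold laplacian. f_equal.
  unfold dx at 1. simpl.
  rewrite (Derive_ext _ (fun t => - dx u (2 * c - t, snd z)))
    by (intro t; exact (dx_reflect (t, snd z))).
  rewrite Derive_opp, (Derive_reflect (fun t => dx u (t, snd z))), Ropp_involutive
    by apply (Hu (2 * c - fst z, snd z)).
  reflexivity.
Qed.

End Reflection.

Lemma pure_second_partials_swap (u : C -> R) :
  pure_second_partials u -> pure_second_partials (fun w => u (snd w, fst w)).
Proof.
  intros Hu z. destruct (Hu (snd z, fst z)) as (H1 & H2 & H3 & H4).
  split; [exact H3|]. split; [exact H4|]. split; [exact H1 | exact H2].
Qed.

Lemma laplacian_swap (u : C -> R) (z : C) :
  laplacian (fun w => u (snd w, fst w)) z = laplacian u (snd z, fst z).
Proof. unfold laplacian. apply Rplus_comm. Qed.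

Lemma is_derive_const_R (a x : R) : is_derive (fun _ : R => a) x 0.
Proof. exact (is_derive_const (K := R_AbsRing) (V := R_NormedModule) a x). Qed.

Lemma continuous_Rplus (f g : C -> R) (z : C) :
  continuous f z -> continuous g z -> continuous (fun w => f w + g w) z.
Proof. exact (continuous_plus (K := R_AbsRing) (V := R_NormedModule) f g z). Qed.

Section Separable.

Variables f f' f'' g g' g'' : R -> R.
Hypotheses (Hf : forall x, is_derive f x (f' x)) (Hf' : forall x, is_derive f' x (f'' x))
           (Hg : forall y, is_derive g y (g' y)) (Hg' : forall y, is_derive g' y (g'' y)).

Lemma dx_separable (z : C) : dx (fun w => f (fst w) + g (snd w)) z = f' (fst z).
Proof.
  apply is_derive_unique. rewrite <- (Rplus_0_r (f' (fst z))).
  apply (is_derive_plus f (fun _ => g (snd z))); [apply Hf | apply is_derive_const_R].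
Qed.

Lemma dy_separable (z : C) : dy (fun w => f (fst w) + g (snd w)) z = g' (snd z).
Proof.
  apply is_derive_unique. rewrite <- (Rplus_0_l (g' (snd z))).
  apply (is_derive_plus (fun _ => f (fst z)) g); [apply is_derive_const_R | apply Hg].
Qed.

Lemma pure_second_partials_separable : pure_second_partials (fun w => f (fst w) + g (snd w)).
Proof.
  intro z. repeat split.
  - eexists. apply (is_derive_plus f (fun _ => g (snd z))); [apply Hf | apply is_derive_const_R].
  - apply (ex_derive_ext f'); [intro t; symmetry; exact (dx_separable (t, snd z))|].
    eexists. apply Hf'.
  - eexists. apply (is_derive_plus (fun _ => f (fst z)) g); [apply is_derive_const_R | apply Hg].
  - apply (ex_derive_ext g'); [intro t; symmetry; exact (dy_separable (fst z, t))|].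
    eexists. apply Hg'.
Qed.

Lemma laplacian_separable (z : C) :
  laplacian (fun w => f (fst w) + g (snd w)) z = f'' (fst z) + g'' (snd z).
Proof.
  unfold laplacian. f_equal.
  - unfold dx at 1. rewrite (Derive_ext _ f') by (intro t; exact (dx_separable (t, snd z))).
    apply is_derive_unique, Hf'.
  - unfold dy at 1. rewrite (Derive_ext _ g') by (intro t; exact (dy_separable (fst z, t))).
    apply is_derive_unique, Hg'.
Qed.

Lemma continuous_separable (z : C) : continuous (fun w => f (fst w) + g (snd w)) z.
Proof.
  destruct z as [x y].
  apply (continuous_Rplus (fun w => f (fst w)) (fun w => g (snd w))).
  - apply (continuous_comp fst f); [apply continuous_fst|].
    apply (ex_derive_continuous (K := R_AbsRing) (V := R_NormedModule)). eexists. apply Hf.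
  - apply (continuous_comp snd g); [apply continuous_snd|].
    apply (ex_derive_continuous (K := R_AbsRing) (V := R_NormedModule)). eexists. apply Hg.
Qed.

End Separable.

Lemma laplace_solution_plus (u v : C -> R) :
  laplace_solution u -> laplace_solution v -> laplace_solution (fun w => u w + v w).
Proof.
  intros (Hu & Hcu & Hlu) (Hv & Hcv & Hlv). split; [|split].
  - exact (pure_second_partials_plus u v Hu Hv).
  - intro z. apply continuous_Rplus; auto.
  - intro z. rewrite (laplacian_plus u v Hu Hv), Hlu, Hlv. ring.
Qed.

Lemma laplace_solution_opp (u : C -> R) :
  laplace_solution u -> laplace_solution (fun w => - u w).
Proof.
  intros (Hu & Hcu & Hlu). split; [|split].
  - exact (pure_second_partials_opp u Hu).
  - intro z. apply (continuous_opp (K := R_AbsRing) (V := R_NormedModule) u), Hcu.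
  - intro z. rewrite laplacian_opp, Hlu. ring.
Qed.

Lemma laplace_solution_reflect (u : C -> R) (c : R) :
  laplace_solution u -> laplace_solution (fun w => u (2 * c - fst w, snd w)).
Proof.
  intros (Hu & Hcu & Hlu). split; [|split].
  - exact (pure_second_partials_reflect u c Hu).
  - apply (continuous_comp_nonexpansive u (fun w => (2 * c - fst w, snd w))); [|exact Hcu].
    intros [x y] [x' y'] r [Hx Hy]. split; [|exact Hy].
    change (Rabs (2 * c - x' - (2 * c - x)) < r).
    replace (2 * c - x' - (2 * c - x)) with (- (x' - x)) by ring.
    rewrite Rabs_Ropp. exact Hx.
  - intro z. rewrite (laplacian_reflect u c Hu). apply Hlu.
Qed.

Lemma laplace_solution_swap (u : C -> R) :
  laplace_solution u -> laplace_solution (fun w => u (snd w, fst w)).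
Proof.
  intros (Hu & Hcu & Hlu). split; [|split].
  - exact (pure_second_partials_swap u Hu).
  - apply (continuous_comp_nonexpansive u (fun w => (snd w, fst w))); [|exact Hcu].
    intros [x y] [x' y'] r [Hx Hy]. split; [exact Hy | exact Hx].
  - intro z. rewrite laplacian_swap. apply Hlu.
Qed.

Lemma laplace_solution_rect_max (u : C -> R) (a b a' b' m : R) :
  a <= b -> a' <= b' -> laplace_solution u ->
  (forall z, on_rect_boundary a b a' b' z -> u z <= m) ->
  forall z, in_rect a b a' b' z -> u z <= m.
Proof.
  intros Hab Hab' (Hpart & Hcont & Hlap) Hbd z Hz.
  (* [u + del (x - a)^2] is strictly subharmonic and exceeds [u] by at most [eta]. *)
  apply Rle_plus_epsilon. intros eta Heta.
  set (del := eta / ((b - a) ^ 2 + 1)).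
  assert (Hdel : 0 < del) by (apply Rdiv_lt_0_compat; nra).
  assert (Hdel_eta : del * ((b - a) ^ 2 + 1) = eta) by (unfold del; field; nra).
  assert (Hq1 : forall x, is_derive (fun x => del * (x - a) ^ 2) x (2 * del * (x - a)))
    by (intro; auto_derive; auto; ring).
  assert (Hq2 : forall x, is_derive (fun x => 2 * del * (x - a)) x (2 * del))
    by (intro; auto_derive; auto; ring).
  pose proof (is_derive_const_R 0) as Hzero.
  pose proof (pure_second_partials_separable _ _ _ _ _ _ Hq1 Hq2 Hzero Hzero) as Hqpart.
  assert (Hv : forall w, in_rect a b a' b' w -> u w + (del * (fst w - a) ^ 2 + 0) <= m + eta).
  { apply (strictly_subharmonic_rect_max (fun w => u w + (del * (fst w - a) ^ 2 + 0))); auto.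
    - intro w. apply continuous_Rplus; [apply Hcont|].
      exact (continuous_separable _ _ _ _ Hq1 Hzero w).
    - exact (pure_second_partials_plus _ _ Hpart Hqpart).
    - intros w _ _. rewrite (laplacian_plus _ _ Hpart Hqpart), Hlap.
      rewrite (laplacian_separable _ _ _ _ _ _ Hq1 Hq2 Hzero Hzero). lra.
    - intros w Hw. pose proof (Hbd w Hw) as Hm. destruct Hw as [[[Hwa Hwb] _] _].
      assert ((fst w - a) ^ 2 <= (b - a) ^ 2) by nra. nra. }
  pose proof (Hv z Hz).
  assert (0 <= del * (fst z - a) ^ 2) by (apply Rmult_le_pos; [lra | apply pow2_ge_0]).
  lra.
Qed.

(** * Liouville's theorem *)

Definition barrier (k c r : R) : C -> R :=
  fun z => k * (2 * r * (fst z - c) - (fst z - c) ^ 2) + k * snd z ^ 2.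

Lemma laplace_solution_barrier (k c r : R) : laplace_solution (barrier k c r).
Proof.
  assert (Hf : forall x, is_derive (fun x => k * (2 * r * (x - c) - (x - c) ^ 2)) x
                                   (k * (2 * r - 2 * (x - c))))
    by (intro; auto_derive; auto; ring).
  assert (Hf' : forall x, is_derive (fun x => k * (2 * r - 2 * (x - c))) x (- 2 * k))
    by (intro; auto_derive; auto; ring).
  assert (Hg : forall y, is_derive (fun y => k * y ^ 2) y (2 * k * y))
    by (intro; auto_derive; auto; ring).
  assert (Hg' : forall y, is_derive (fun y => 2 * k * y) y (2 * k))
    by (intro; auto_derive; auto; ring).
  split; [|split].
  - exact (pure_second_partials_separable _ _ _ _ _ _ Hf Hf' Hg Hg').
  - exact (continuous_separable _ _ _ _ Hf Hg).
  - intro z. unfold barrier.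
    rewrite (laplacian_separable _ _ _ _ _ _ Hf Hf' Hg Hg'). ring.
Qed.

Lemma barrier_ge_sq (k c r : R) (z : C) :
  0 <= k -> c <= fst z <= c + r -> k * snd z ^ 2 <= barrier k c r z.
Proof.
  intros Hk Hx. unfold barrier.
  assert (0 <= (fst z - c) * (2 * r - (fst z - c))) by (apply Rmult_le_pos; lra).
  assert (0 <= k * (2 * r * (fst z - c) - (fst z - c) ^ 2)) by (apply Rmult_le_pos; nra).
  lra.
Qed.

Lemma barrier_ge_far_sides (k c r : R) (z : C) :
  0 <= k -> in_rect c (c + r) (- r) r z -> (fst z = c + r \/ snd z = - r \/ snd z = r) ->
  k * r ^ 2 <= barrier k c r z.
Proof.
  intros Hk [Hx Hy] Hside. pose proof (barrier_ge_sq k c r z Hk Hx) as Hsq.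
  destruct Hside as [Hxr | Hyr].
  - unfold barrier in *. rewrite Hxr in *.
    assert (0 <= k * snd z ^ 2) by (apply Rmult_le_pos; [lra | apply pow2_ge_0]). nra.
  - assert (snd z ^ 2 = r ^ 2) by (destruct Hyr as [-> | ->]; ring). nra.
Qed.

Lemma barrier_le (k c r : R) (z : C) :
  0 <= k -> 1 <= r -> c <= fst z ->
  barrier k c r z <= k * r * (2 * (fst z - c) + snd z ^ 2).
Proof.
  intros Hk Hr Hx. unfold barrier.
  assert (0 <= k * (fst z - c) ^ 2) by (apply Rmult_le_pos; [lra | apply pow2_ge_0]).
  assert (0 <= k * snd z ^ 2) by (apply Rmult_le_pos; [lra | apply pow2_ge_0]).
  assert (0 <= k * snd z ^ 2 * (r - 1)) by (apply Rmult_le_pos; lra).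
  nra.
Qed.

Lemma laplace_solution_le_barrier (W : C -> R) (B c r : R) :
  laplace_solution W -> (forall z, W z <= B) -> (forall y, W (c, y) <= 0) -> 0 < r ->
  forall z, in_rect c (c + r) (- r) r z -> W z <= barrier (Rabs B / r ^ 2) c r z.
Proof.
  intros HW HB Hline Hr z Hz.
  set (k := Rabs B / r ^ 2).
  assert (Hk : 0 <= k) by (apply Rdiv_le_0_compat; [apply Rabs_pos | nra]).
  assert (Hkr : k * r ^ 2 = Rabs B) by (unfold k; field; lra).
  enough (W z + - barrier k c r z <= 0) by lra.
  apply (laplace_solution_rect_max (fun w => W w + - barrier k c r w) c (c + r) (- r) r 0);
    [lra | lra | | | exact Hz].
  - apply laplace_solution_plus; [exact HW|].
    apply laplace_solution_opp, laplace_solution_barrier.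
  - intros [x y] [Hxy Hside]. simpl in Hside.
    destruct (Req_dec x c) as [-> | Hxc].
    + pose proof (Hline y). pose proof (barrier_ge_sq k c r (c, y) Hk (proj1 Hxy)).
      simpl in *. nra.
    + pose proof (barrier_ge_far_sides k c r (x, y) Hk Hxy ltac:(simpl; tauto)).
      pose proof (HB (x, y)). pose proof (Rle_abs B). lra.
Qed.

Lemma laplace_solution_halfplane_nonpos (W : C -> R) (B c : R) :
  laplace_solution W -> (forall z, W z <= B) -> (forall y, W (c, y) <= 0) ->
  forall z, c <= fst z -> W z <= 0.
Proof.
  intros HW HB Hline z Hz.
  apply Rle_plus_epsilon. intros eta Heta. rewrite Rplus_0_l.
  set (A := Rabs B * (2 * (fst z - c) + snd z ^ 2)).
  assert (HA : 0 <= A) by (apply Rmult_le_pos; [apply Rabs_pos | nra]).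
  assert (HAeta : 0 <= A / eta) by (apply Rdiv_le_0_compat; lra).
  (* The rectangle of half-width [r] contains [z], and the barrier at [z] is at most [A / r]. *)
  set (r := 1 + (fst z - c) + Rabs (snd z) + A / eta).
  pose proof (Rabs_pos (snd z)).
  assert (Hr : 1 <= r) by (unfold r; lra).
  assert (Hzr : in_rect c (c + r) (- r) r z).
  { split; [unfold r; lra|]. apply Rabs_le_between. unfold r; lra. }
  pose proof (laplace_solution_le_barrier W B c r HW HB Hline ltac:(lra) z Hzr) as Hbar.
  assert (Hk : 0 <= Rabs B / r ^ 2) by (apply Rdiv_le_0_compat; [apply Rabs_pos | nra]).
  pose proof (barrier_le (Rabs B / r ^ 2) c r z Hk Hr Hz).
  assert (Rabs B / r ^ 2 * r * (2 * (fst z - c) + snd z ^ 2) = A / r) by (unfold A; field; lra).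
  assert (A / r < eta).
  { apply (Rmult_lt_reg_r r); [lra|].
    replace (A / r * r) with (eta * (A / eta)) by (field; lra).
    apply Rmult_lt_compat_l; [lra|]. unfold r. lra. }
  lra.
Qed.

Lemma bounded_laplace_solution_reflect (u : C -> R) (M c : R) :
  laplace_solution u -> (forall z, Rabs (u z) <= M) ->
  forall x y, u (2 * c - x, y) = u (x, y).
Proof.
  intros Hu HM.
  set (W z := u z + - u (2 * c - fst z, snd z)).
  assert (HW : laplace_solution W)
    by (apply laplace_solution_plus;
        [|apply laplace_solution_opp, laplace_solution_reflect]; exact Hu).
  assert (HWb : forall z, W z <= 2 * M /\ - W z <= 2 * M).
  { intro z. pose proof (HM z) as H1. pose proof (HM (2 * c - fst z, snd z)) as H2.
    apply Rabs_le_between in H1. apply Rabs_le_between in H2. unfold W. lra. }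
  assert (Hline : forall y, W (c, y) = 0)
    by (intro y; unfold W; simpl; replace (2 * c - c) with c by ring; ring).
  assert (Hhalf : forall x y, c <= x -> u (2 * c - x, y) = u (x, y)).
  { intros x y Hx.
    pose proof (laplace_solution_halfplane_nonpos W (2 * M) c HW
      (fun z => proj1 (HWb z)) (fun y => Req_le _ _ (Hline y)) (x, y) Hx).
    pose proof (laplace_solution_halfplane_nonpos (fun z => - W z) (2 * M) c
      (laplace_solution_opp W HW) (fun z => proj2 (HWb z))
      (fun y => ltac:(cbv beta; rewrite (Hline y); lra)) (x, y) Hx).
    unfold W in *. simpl in *. lra. }
  intros x y. destruct (Rle_or_lt c x) as [Hx | Hx]; [now apply Hhalf|].
  rewrite <- (Hhalf (2 * c - x) y) by lra.
  now replace (2 * c - (2 * c - x)) with x by ring.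
Qed.

Lemma bounded_laplace_solution_const (u : C -> R) (M : R) :
  laplace_solution u -> (forall z, Rabs (u z) <= M) -> forall z w, u z = u w.
Proof.
  assert (Hrow : forall v, laplace_solution v -> (forall z, Rabs (v z) <= M) ->
                 forall x x' y, v (x, y) = v (x', y)).
  { intros v Hv HvM x x' y.
    rewrite <- (bounded_laplace_solution_reflect v M ((x + x') / 2) Hv HvM x y).
    now replace (2 * ((x + x') / 2) - x) with x' by field. }
  intros Hu HM [x y] [x' y'].
  rewrite (Hrow u Hu HM x x' y).
  exact (Hrow (fun w => u (snd w, fst w)) (laplace_solution_swap u Hu) (fun w => HM _) y y' x').
Qed.

Theorem corollary2 (u v : C -> R) :
  harmonic u -> harmonic v ->
  (exists z1 z2 : C, (u z1, v z1) <> (u z2, v z2)) ->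
  (exists d : C, asymptotic_direction (image (fun z => (u z, v z))) d) /\
  closed (asymptotic_direction (image (fun z => (u z, v z)))).
Proof.
  intros Hu Hv [z1 [z2 Hne]].
  split; [|apply closed_asymptotic_direction].
  apply unbounded_asymptotic_direction. intro K.
  apply NNPP. intro Hbounded.
  assert (HK : forall z, Rabs (u z) <= K /\ Rabs (v z) <= K).
  { intro z. assert (Hz : Cmod (u z, v z) <= K).
    { apply Rnot_lt_le. intro HKz. apply Hbounded.
      exists (u z, v z). split; [now exists z | exact HKz]. }
    pose proof (Rabs_fst_snd_le_Cmod (u z, v z)). simpl in *. lra. }
  apply Hne. f_equal.
  - apply (bounded_laplace_solution_const u K); [now apply harmonic_laplace_solution | apply HK].
  - apply (bounded_laplace_solution_const v K); [now apply harmonic_laplace_solution | apply HK].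
Qed.
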